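(* Let $F:\mathbb R^n\to\mathbb R^n$ be monotone with $\|F(z)-F(z')\|\le\ell\|z-z'\|$ and $\|\partial F(z)-\partial F(z')\|_\sigma\le\Lambda\|z-z'\|$. Let $\eta>0$, $z^{(-1)},z^{(0)}\in\mathbb R^n$, $z^{(t+1)}=z^{(t)}-2\eta F(z^{(t)})+\eta F(z^{(t-1)})$, $w^{(t)}:=z^{(t)}+\eta F(z^{(t-1)})$, $A^{(t)}:=\int_0^1\partial F(w^{(t)}-(1-\alpha)\eta F(z^{(t)}))d\alpha$, $B^{(t)}:=\int_0^1\partial F(w^{(t)}-(1-\alpha)\eta F(z^{(t-1)}))d\alpha$. Fix an integer $T\ge1$, set $C^{(T)}:=0$ and recursively $C^{(t-1)}:=(I-\eta A^{(t)}+C^{(t)})^{-1}\eta(\eta A^{(t)}-C^{(t)})B^{(t)}$ for $t=T,\dots,0$, and define $$D^{(t)}:=-\eta C^{(t)}B^{(t)}+(I-\eta A^{(t)}+C^{(t)})^{-1}(\eta A^{(t)}-C^{(t)})^2\eta B^{(t)}.$$ Suppose there is $L_0>0$ such that for all $0\le t\le T$, $\max\{\eta\|A^{(t)}\|_\sigma,\eta\|B^{(t)}\|_\sigma\}\le L_0\le\sqrt{1/200}$, and $\eta\ell\le 2/3$. Then for each $t\in\{1,\dots,T\}$, $$D^{(t)}+(D^{(t)})^\top\preceq 6L_0\eta^2(B^{(t)})^\top B^{(t)}+4L_0\eta^2A^{(t)}(A^{(t)})^\top+\Big(4L_0+\frac1{3L_0}\Big)C^{(t)}(C^{(t)})^\top$$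 and $$(D^{(t)})^\top D^{(t)}\preceq 60L_0^4\eta^2(B^{(t)})^\top B^{(t)}.$$
   Context: $F$ monotone means $\langle F(z')-F(z),z'-z\rangle\ge0$ for all $z,z'$. $\partial F$ is the Jacobian; $\|\cdot\|_\sigma$ the spectral norm; $S\preceq T$ means $T-S$ is positive semidefinite. (Under these hypotheses the inverses in the definitions exist.) *)

From HB Require Import structures.
From mathcomp Require Import all_boot all_order all_algebra.
From mathcomp Require Import all_classical all_reals all_analysis.
Set Implicit Arguments. Unset Strict Implicit. Unset Printing Implicit Defensive.
Import Order.TTheory GRing.Theory Num.Theory.
Import numFieldNormedType.Exports.
Local Open Scope classical_set_scope.
Local Open Scope ring_scope.

Section Defs.
Variables (R : realType) (n : nat).
Notation vec := 'cV[R]_n.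
Notation mat := 'M[R]_n.

Definition dotv (u v : vec) : R := (u^T *m v) 0 0.
Definition enorm (v : vec) : R := Num.sqrt (dotv v v).

Definition specnorm (M : mat) : R :=
  sup [set enorm (M *m x) | x in [set x : vec | enorm x <= 1]].

Definition psd (M : mat) : Prop := forall x : vec, 0 <= (x^T *m M *m x) 0 0.
Definition loewner_le (S T : mat) : Prop := psd (T - S).

Definition monotone_op (F : vec -> vec) : Prop :=
  forall z z' : vec, 0 <= dotv (F z' - F z) (z' - z).

Definition is_jacobian (F : vec -> vec) (J : vec -> mat) : Prop :=
  forall z : vec, forall e : R, 0 < e -> exists2 d : R, 0 < d &
    forall h : vec, enorm h < d ->
      enorm (F (z + h) - F z - J z *m h) <= e * enorm h.

Definition mat_int01 (M : R -> mat) : mat :=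
  \matrix_(i, j) (\int[(@lebesgue_measure R)]_(a in `[0%R, 1%R]) M a i j).

Variables (F : vec -> vec) (J : vec -> mat) (eta : R) (zm1 z0 : vec).

(* state t = (z^(t-1), z^(t)) *)
Fixpoint og_state (t : nat) : vec * vec :=
  match t with
  | 0 => (zm1, z0)
  | t'.+1 => let (zp, zc) := og_state t' in
             (zc, zc - (2 * eta) *: F zc + eta *: F zp)
  end.

Definition zseq (t : nat) : vec := (og_state t).2.
Definition zprev (t : nat) : vec := (og_state t).1.
Definition wseq (t : nat) : vec := zseq t + eta *: F (zprev t).

Definition ogA (t : nat) : mat :=
  mat_int01 (fun a => J (wseq t - ((1 - a) * eta) *: F (zseq t))).
Definition ogB (t : nat) : mat :=
  mat_int01 (fun a => J (wseq t - ((1 - a) * eta) *: F (zprev t))).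

Variable T : nat.

(* Caux k = C^(T-k); C^(T) = 0,
   C^(t-1) = (I - eta A^(t) + C^(t))^{-1} eta (eta A^(t) - C^(t)) B^(t). *)
Fixpoint Caux (k : nat) : mat :=
  match k with
  | 0 => 0
  | k'.+1 => let t := (T - k')%N in
             invmx (1%:M - eta *: ogA t + Caux k')
               *m (eta *: (eta *: ogA t - Caux k')) *m ogB t
  end.

Definition ogC (t : nat) : mat := Caux (T - t).

Definition ogD (t : nat) : mat :=
  - (eta *: (ogC t *m ogB t))
  + invmx (1%:M - eta *: ogA t + ogC t)
      *m ((eta *: ogA t - ogC t) *m (eta *: ogA t - ogC t))
      *m (eta *: ogB t).

End Defs.

(** Put [E := eta A - C].  Along the backward recursion from [C^(T) = 0] the
    operator norm of [C^(t)] stays below [2 L0^2], so [||E|| <= L0 + 2 L0^2 < 1],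
    [G := (I - E)^-1] exists and [||G E|| <= ||E|| / (1 - ||E||) <= 3 L0 / 2].
    Since [G] commutes with [E], [D = X (eta B)] with [X := -C + E G E] and
    [||X|| <= 4 L0^2]; squaring gives the bound on [D^T D].  For the symmetric
    part, [x^T (D + D^T) x = 2 <x, X eta B x>] is at most
    [2 ||C^T x|| ||eta B x|| + 3 L0 (||eta A^T x|| + ||C^T x||) ||eta B x||],
    and AM-GM splits the products into the three squares of the bound. *)
From HB Require Import structures.
From mathcomp Require Import all_boot all_order all_algebra.
From mathcomp Require Import all_classical all_reals all_analysis.
From mathcomp Require Import ring lra.
Set Implicit Arguments. Unset Strict Implicit. Unset Printing Implicit Defensive.
Import Order.TTheory GRing.Theory Num.Theory.
Local Open Scope ring_scope.

Section Euclidean.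
Variables (R : realType) (n : nat).
Implicit Types (u v w x y : 'cV[R]_n) (M P S : 'M[R]_n).

Lemma dotvE u v : dotv u v = \sum_i u i 0 * v i 0.
Proof. by rewrite /dotv mxE; apply: eq_bigr => i _; rewrite mxE. Qed.

Lemma dotvC u v : dotv u v = dotv v u.
Proof. by rewrite !dotvE; apply: eq_bigr => i _; rewrite mulrC. Qed.

Lemma dotvDl u v w : dotv (u + v) w = dotv u w + dotv v w.
Proof. by rewrite !dotvE -big_split; apply: eq_bigr => i _; rewrite mxE mulrDl. Qed.

Lemma dotvDr u v w : dotv w (u + v) = dotv w u + dotv w v.
Proof. by rewrite !(dotvC w) dotvDl. Qed.

Lemma dotvZl (c : R) u v : dotv (c *: u) v = c * dotv u v.
Proof. by rewrite !dotvE mulr_sumr; apply: eq_bigr => i _; rewrite mxE mulrA. Qed.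

Lemma dotvZr (c : R) u v : dotv v (c *: u) = c * dotv v u.
Proof. by rewrite !(dotvC v) dotvZl. Qed.

Lemma dotvNl u v : dotv (- u) v = - dotv u v.
Proof. by rewrite -scaleN1r dotvZl mulN1r. Qed.

Lemma dotvNr u v : dotv v (- u) = - dotv v u.
Proof. by rewrite !(dotvC v) dotvNl. Qed.

Lemma dotvBr u v w : dotv w (u - v) = dotv w u - dotv w v.
Proof. by rewrite dotvDr dotvNr. Qed.

Lemma dotv0l v : dotv 0 v = 0.
Proof. by rewrite -(scale0r 0) dotvZl mul0r. Qed.

Lemma dotv_ge0 u : 0 <= dotv u u.
Proof. by rewrite dotvE; apply: sumr_ge0 => i _; rewrite -expr2 sqr_ge0. Qed.

Lemma dotv_eq0 u : dotv u u = 0 -> u = 0.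
Proof.
rewrite dotvE => /psumr_eq0P u0; apply/matrixP => i j; rewrite ord1 mxE.
have /eqP := u0 (fun k _ => ltac:(by rewrite -expr2 sqr_ge0)) i isT.
by rewrite mulf_eq0 orbb => /eqP.
Qed.

Lemma dotv_mulmxr M u v : dotv u (M *m v) = dotv (M^T *m u) v.
Proof. by rewrite /dotv trmx_mul trmxK mulmxA. Qed.

Lemma enorm_ge0 u : 0 <= enorm u.
Proof. exact: sqrtr_ge0. Qed.

Lemma enorm_sq u : enorm u ^+ 2 = dotv u u.
Proof. by rewrite /enorm sqr_sqrtr // dotv_ge0. Qed.

Lemma enorm_eq0 u : enorm u = 0 -> u = 0.
Proof.
move=> /eqP; rewrite sqrtr_eq0 => u0; apply: dotv_eq0.
by apply/eqP; rewrite eq_le u0 dotv_ge0.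
Qed.

Lemma enorm0 : enorm (0 : 'cV[R]_n) = 0.
Proof. by rewrite /enorm dotv0l sqrtr0. Qed.

Lemma enormZ (c : R) u : enorm (c *: u) = `|c| * enorm u.
Proof.
by rewrite /enorm dotvZl dotvZr mulrA -expr2 sqrtrM ?sqr_ge0 // sqrtr_sqr.
Qed.

Lemma enormN u : enorm (- u) = enorm u.
Proof. by rewrite -scaleN1r enormZ normrN1 mul1r. Qed.

Lemma cauchy_schwarz u v : dotv u v <= enorm u * enorm v.
Proof.
have [u0|u0] := eqVneq (enorm u) 0.
  by rewrite (enorm_eq0 u0) dotv0l enorm0 mul0r.
have [v0|v0] := eqVneq (enorm v) 0.
  by rewrite (enorm_eq0 v0) dotvC dotv0l enorm0 mulr0.
have uv0 : 0 < enorm u * enorm v by rewrite mulr_gt0 // lt_def ?u0 ?v0 enorm_ge0.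
have := dotv_ge0 (enorm v *: u - enorm u *: v).
rewrite dotvDl !dotvDr !dotvNl !dotvNr !dotvZl !dotvZr (dotvC v u) -!enorm_sq.
nra.
Qed.

Lemma enormD u v : enorm (u + v) <= enorm u + enorm v.
Proof.
have : enorm (u + v) ^+ 2 <= (enorm u + enorm v) ^+ 2.
  rewrite enorm_sq dotvDl !dotvDr (dotvC v u) -!enorm_sq.
  have := cauchy_schwarz u v; nra.
have := enorm_ge0 (u + v); have := enorm_ge0 u; have := enorm_ge0 v; nra.
Qed.

Lemma loewner_leP S P :
  (forall x, dotv x (S *m x) <= dotv x (P *m x)) <-> loewner_le S P.
Proof.
rewrite /loewner_le /psd; split=> SP x; have := SP x;
  by rewrite -mulmxA -/(dotv x _) mulmxBl dotvBr subr_ge0.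
Qed.

Lemma dotv_trmx M x : dotv x (M^T *m x) = dotv x (M *m x).
Proof. by rewrite dotv_mulmxr trmxK dotvC. Qed.

Lemma dotv_trmx_mul M x : dotv x ((M^T *m M) *m x) = enorm (M *m x) ^+ 2.
Proof. by rewrite -mulmxA dotv_mulmxr trmxK enorm_sq. Qed.

Lemma dotv_mul_trmx M x : dotv x ((M *m M^T) *m x) = enorm (M^T *m x) ^+ 2.
Proof. by rewrite -dotv_trmx_mul trmxK. Qed.

Definition opnorm_le M (c : R) := forall x, enorm (M *m x) <= c * enorm x.

Lemma opnorm_le_trans M a b : a <= b -> opnorm_le M a -> opnorm_le M b.
Proof. by move=> ab Ma x; apply: le_trans (Ma x) _; rewrite ler_wpM2r ?enorm_ge0. Qed.

Lemma opnorm_leD M P a b : opnorm_le M a -> opnorm_le P b -> opnorm_le (M + P) (a + b).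
Proof.
by move=> Ma Pb x; rewrite mulmxDl mulrDl; apply: le_trans (enormD _ _) (lerD _ _).
Qed.

Lemma opnorm_leN M a : opnorm_le M a -> opnorm_le (- M) a.
Proof. by move=> Ma x; rewrite mulNmx enormN. Qed.

Lemma opnorm_leB M P a b : opnorm_le M a -> opnorm_le P b -> opnorm_le (M - P) (a + b).
Proof. by move=> Ma /opnorm_leN; apply: opnorm_leD. Qed.

Lemma opnorm_leM M P a b :
  0 <= a -> opnorm_le M a -> opnorm_le P b -> opnorm_le (M *m P) (a * b).
Proof.
by move=> a0 Ma Pb x; rewrite -mulmxA -mulrA; apply: le_trans (Ma _) (ler_wpM2l _ _).
Qed.

Lemma opnorm_leZ M a (c : R) : opnorm_le M a -> opnorm_le (c *: M) (`|c| * a).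
Proof. by move=> Ma x; rewrite -scalemxAl enormZ -mulrA ler_wpM2l. Qed.

Lemma opnorm_le0 c : 0 <= c -> opnorm_le 0 c.
Proof. by move=> c0 x; rewrite mul0mx enorm0 mulr_ge0 ?enorm_ge0. Qed.

Lemma coord_sq_le_dotv u (j : 'I_n) : u j 0 ^+ 2 <= dotv u u.
Proof.
rewrite dotvE (bigD1 j) //= -expr2 lerDl; apply: sumr_ge0 => i _.
by rewrite -expr2 sqr_ge0.
Qed.

Lemma specnorm_has_ubound M :
  has_ubound [set enorm (M *m x) | x in [set x : 'cV[R]_n | enorm x <= 1]].
Proof.
pose K := \sum_i \sum_j `|M i j|.
exists (1 + n%:R * K ^+ 2) => _ [x /= x1 <-].
have xj1 j : `|x j 0| <= 1.
  have := coord_sq_le_dotv x j; rewrite -enorm_sq => xj.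
  rewrite ler_norml; apply/andP; split; have := enorm_ge0 x; nra.
have MxK i : `|(M *m x) i 0| <= K.
  rewrite mxE; apply: le_trans (ler_norm_sum _ _ _) _.
  apply: (@le_trans _ _ (\sum_j `|M i j|)).
    by apply: ler_sum => j _; rewrite normrM ler_piMr.
  rewrite /K [X in _ <= X](bigD1 i) //= lerDl.
  by apply: sumr_ge0 => k _; apply: sumr_ge0.
have : enorm (M *m x) ^+ 2 <= n%:R * K ^+ 2.
  rewrite enorm_sq dotvE.
  apply: (@le_trans _ _ (\sum_(i < n) K ^+ 2)); last by rewrite sumr_const card_ord mulr_natl.
  apply: ler_sum => i _; rewrite -expr2 -real_normK ?num_real //.
  have := MxK i; have := normr_ge0 ((M *m x) i 0); nra.
have := enorm_ge0 (M *m x); nra.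
Qed.

Lemma opnorm_le_specnorm M : opnorm_le M (specnorm M).
Proof.
move=> x; have [x0|x0] := eqVneq (enorm x) 0.
  by rewrite (enorm_eq0 x0) mulmx0 enorm0 mulr0.
have xp : 0 < enorm x by rewrite lt_def x0 enorm_ge0.
have : enorm (M *m ((enorm x)^-1 *: x)) <= specnorm M.
  apply: (ub_le_sup (specnorm_has_ubound M)); exists ((enorm x)^-1 *: x) => //=.
  by rewrite enormZ gtr0_norm ?invr_gt0 // mulVf.
by rewrite -scalemxAr enormZ gtr0_norm ?invr_gt0 // ler_pdivrMl // mulrC.
Qed.

Lemma unitmx_1B M e : e < 1 -> opnorm_le M e -> (1%:M - M) \in unitmx.
Proof.
move=> e1 Me.
have inj x : (1%:M - M) *m x = 0 -> x = 0.
  rewrite mulmxBl mul1mx => /eqP; rewrite subr_eq0 => /eqP Mx.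
  by apply: enorm_eq0; have := Me x; rewrite -Mx; have := enorm_ge0 x; nra.
rewrite -unitmx_tr unitmxE unitfE; apply/negP => /det0P[v v0].
move=> /(congr1 trmx); rewrite trmx_mul trmxK trmx0 => /inj /(congr1 trmx).
by rewrite trmxK trmx0 => v00; rewrite v00 eqxx in v0.
Qed.

Lemma opnorm_le_invmx_1B_mul M e : 0 <= e -> e < 1 -> opnorm_le M e ->
  opnorm_le (invmx (1%:M - M) *m M) (e / (1 - e)).
Proof.
move=> e0 e1 Me x; set y := _ *m x.
have : (1%:M - M) *m y = M *m x by rewrite /y !mulmxA mulmxV ?mul1mx // (unitmx_1B e1).
rewrite mulmxBl mul1mx => /eqP; rewrite subr_eq => /eqP yE.
have : enorm y <= e * enorm x + e * enorm y.
  by rewrite {1}yE; apply: le_trans (enormD _ _) (lerD _ _).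
rewrite mulrAC ler_pdivlMr ?subr_gt0 //; nra.
Qed.

Lemma comm_mx_invmx M P : comm_mx M P -> comm_mx (invmx M) P.
Proof.
rewrite /comm_mx => MP; have [U|U] := boolP (M \in unitmx); last by rewrite invmx_out.
apply: (canRL (mulmxK U)).
by rewrite -mulmxA -MP mulmxA mulVmx // mul1mx.
Qed.

End Euclidean.

Lemma amgm_mixed_bound (R : realFieldType) (L0 P Q r : R) : 0 < L0 ->
  2 * (r * Q + 3 / 2 * L0 * (P + r) * Q)
    <= 6 * L0 * Q ^+ 2 + 4 * L0 * P ^+ 2 + (4 * L0 + 1 / (3 * L0)) * r ^+ 2.
Proof.
move=> L0_gt0.
have sq : 1 / (3 * L0) * (r - 3 * L0 * Q) ^+ 2
          = 1 / (3 * L0) * r ^+ 2 - 2 * r * Q + 3 * L0 * Q ^+ 2.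
  by field; rewrite gt_eqF.
have : 0 <= 1 / (3 * L0) * (r - 3 * L0 * Q) ^+ 2.
  by rewrite mulr_ge0 ?sqr_ge0 // divr_ge0 // mulr_ge0 // ltW.
have : 0 <= L0 * ((P - Q) ^+ 2 + (r - Q) ^+ 2).
  by rewrite mulr_ge0 ?addr_ge0 ?sqr_ge0 // ltW.
rewrite sq; nra.
Qed.

Lemma L0_small_bounds (R : realFieldType) (L0 : R) : 0 < L0 -> L0 <= 1 / 10 ->
  let e := L0 + 2 * L0 ^+ 2 in
  [/\ 0 <= e, e < 1, e / (1 - e) <= 3 / 2 * L0
     & 2 * L0 ^+ 2 + e * (3 / 2 * L0) <= 4 * L0 ^+ 2].
Proof.
move=> L0_gt0 L0_small e; have e_lt1 : e < 1 by rewrite /e; nra.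
split=> //; rewrite ?ler_pdivrMr ?subr_gt0 // /e; nra.
Qed.

Section OneStep.
Variables (R : realType) (n : nat) (A B C : 'M[R]_n) (eta L0 : R).
Hypotheses (eta_gt0 : 0 < eta) (L0_gt0 : 0 < L0) (L0_small : L0 <= 1 / 10).
Hypotheses (etaA_le : opnorm_le (eta *: A) L0) (etaB_le : opnorm_le (eta *: B) L0).
Hypothesis C_le : opnorm_le C (2 * L0 ^+ 2).

Let E := eta *: A - C.
Let G := invmx (1%:M - E).

Lemma one_sub_E : 1%:M - eta *: A + C = 1%:M - E.
Proof. by rewrite /E opprB addrA addrAC. Qed.

Lemma opnorm_le_E : opnorm_le E (L0 + 2 * L0 ^+ 2).
Proof. exact: opnorm_leB. Qed.

Lemma opnorm_le_GE : opnorm_le (G *m E) (3 / 2 * L0).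
Proof.
have [e_ge0 e_lt1 ratio_le _] := L0_small_bounds L0_gt0 L0_small.
exact: opnorm_le_trans ratio_le (opnorm_le_invmx_1B_mul e_ge0 e_lt1 opnorm_le_E).
Qed.

Lemma opnorm_le_next_C :
  opnorm_le (invmx (1%:M - eta *: A + C) *m (eta *: (eta *: A - C)) *m B) (2 * L0 ^+ 2).
Proof.
rewrite one_sub_E -/E -/G -mulmxA -scalemxAl scalemxAr mulmxA.
apply: opnorm_le_trans (opnorm_leM _ opnorm_le_GE etaB_le); have := L0_gt0; nra.
Qed.

Let X := - C + E *m (G *m E).

Lemma ogD_factor : - (eta *: (C *m B)) + invmx (1%:M - eta *: A + C)
  *m ((eta *: A - C) *m (eta *: A - C)) *m (eta *: B) = X *m (eta *: B).
Proof.
rewrite one_sub_E -/E -/G /X [RHS]mulmxDl mulNmx scalemxAr; congr (_ + _).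
have GE : comm_mx G E.
  exact/comm_mx_invmx/comm_mx_sym/comm_mxB/comm_mx_refl/comm_mx1.
by rewrite [G *m (E *m E)]mulmxA {1}GE -!mulmxA.
Qed.

Lemma opnorm_le_X : opnorm_le X (4 * L0 ^+ 2).
Proof.
have [e_ge0 _ _ X_le] := L0_small_bounds L0_gt0 L0_small.
exact: opnorm_le_trans X_le
  (opnorm_leD (opnorm_leN C_le) (opnorm_leM e_ge0 opnorm_le_E opnorm_le_GE)).
Qed.

Lemma dotv_X_le x y : dotv x (X *m y) <= enorm (C^T *m x) * enorm y
  + 3 / 2 * L0 * (eta * enorm (A^T *m x) + enorm (C^T *m x)) * enorm y.
Proof.
rewrite mulmxDl mulNmx dotvDr dotvNr -mulmxA (dotv_mulmxr C) (dotv_mulmxr E) -dotvNl.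
apply: lerD; first by rewrite -(enormN (C^T *m x)) cauchy_schwarz.
have ETx : enorm (E^T *m x) <= eta * enorm (A^T *m x) + enorm (C^T *m x).
  rewrite /E linearB /= linearZ /= mulmxBl -scalemxAl.
  by apply: le_trans (enormD _ _) _; rewrite enormN enormZ gtr0_norm.
apply: le_trans (cauchy_schwarz _ _) _; rewrite mulrAC mulrC.
by apply: ler_pM; rewrite ?enorm_ge0 ?opnorm_le_GE.
Qed.

Lemma loewner_le_sym_part : loewner_le (X *m (eta *: B) + (X *m (eta *: B))^T)
  ((6 * L0 * eta ^+ 2) *: (B^T *m B) + (4 * L0 * eta ^+ 2) *: (A *m A^T)
   + (4 * L0 + 1 / (3 * L0)) *: (C *m C^T)).
Proof.
apply/loewner_leP => x; set D := X *m (eta *: B).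
rewrite !mulmxDl !dotvDr dotv_trmx -!scalemxAl !dotvZr dotv_trmx_mul !dotv_mul_trmx.
have := dotv_X_le x ((eta *: B) *m x).
rewrite mulmxA -/D -scalemxAl enormZ gtr0_norm //.
have := amgm_mixed_bound (eta * enorm (A^T *m x)) (eta * enorm (B *m x))
  (enorm (C^T *m x)) L0_gt0.
rewrite !exprMn; lra.
Qed.

Lemma loewner_le_gram : loewner_le ((X *m (eta *: B))^T *m (X *m (eta *: B)))
  ((60 * L0 ^+ 4 * eta ^+ 2) *: (B^T *m B)).
Proof.
apply/loewner_leP => x.
rewrite -scalemxAl dotvZr !dotv_trmx_mul.
have := opnorm_le_X ((eta *: B) *m x).
rewrite mulmxA -scalemxAl enormZ gtr0_norm //.
have := enorm_ge0 (X *m (eta *: B) *m x); have := enorm_ge0 (B *m x).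
set d := enorm _; set q := enorm _.
nra.
Qed.

End OneStep.

Theorem lemma16 (R : realType) (n : nat) (F : 'cV[R]_n -> 'cV[R]_n)
  (J : 'cV[R]_n -> 'M[R]_n) (ell Lam eta L0 : R) (zm1 z0 : 'cV[R]_n) (T : nat) :
  monotone_op F ->
  (forall z z', enorm (F z - F z') <= ell * enorm (z - z')) ->
  is_jacobian F J ->
  (forall z z', specnorm (J z - J z') <= Lam * enorm (z - z')) ->
  0 < eta ->
  (1 <= T)%N ->
  0 < L0 ->
  (forall t : nat, (t <= T)%N ->
     eta * specnorm (ogA F J eta zm1 z0 t) <= L0 /\
     eta * specnorm (ogB F J eta zm1 z0 t) <= L0) ->
  L0 <= Num.sqrt (1 / 200) ->
  eta * ell <= 2 / 3 ->
  forall t : nat, (1 <= t)%N -> (t <= T)%N ->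
    let A := ogA F J eta zm1 z0 t in
    let B := ogB F J eta zm1 z0 t in
    let C := ogC F J eta zm1 z0 T t in
    let D := ogD F J eta zm1 z0 T t in
    loewner_le (D + D^T)
      ((6 * L0 * eta ^+ 2) *: (B^T *m B)
       + (4 * L0 * eta ^+ 2) *: (A *m A^T)
       + (4 * L0 + 1 / (3 * L0)) *: (C *m C^T))
    /\
    loewner_le (D^T *m D) ((60 * L0 ^+ 4 * eta ^+ 2) *: (B^T *m B)).
Proof.
move=> _ _ _ _ eta_gt0 _ L0_gt0 AB_le L0_sqrt _ t _ tT A B C D.
have L0_small : L0 <= 1 / 10.
  have := sqr_sqrtr (_ : 0 <= 1 / 200 :> R); have := sqrtr_ge0 (1 / 200 : R).
  by move: L0_sqrt; nra.
have etaZ_le (M : 'M[R]_n) : eta * specnorm M <= L0 -> opnorm_le (eta *: M) L0.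
  move=> ML0; have := opnorm_leZ eta (opnorm_le_specnorm M).
  by rewrite gtr0_norm //; apply: opnorm_le_trans.
have C_le k : opnorm_le (Caux F J eta zm1 z0 T k) (2 * L0 ^+ 2).
  elim: k => [|k IHk] /=; first by apply: opnorm_le0; nra.
  have [As_le Bs_le] := AB_le _ (leq_subr k T).
  exact: opnorm_le_next_C L0_gt0 L0_small (etaZ_le _ As_le) (etaZ_le _ Bs_le) IHk.
have [/etaZ_le etaA_le _] := AB_le t tT.
have Ct_le : opnorm_le C (2 * L0 ^+ 2) by apply: C_le.
rewrite /D /ogD -/A -/B -/C ogD_factor; split.
- exact: loewner_le_sym_part eta_gt0 L0_gt0 L0_small etaA_le Ct_le.
- exact: loewner_le_gram eta_gt0 L0_gt0 L0_small etaA_le Ct_le.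
Qed.
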